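(* A real sequence (finite or infinite) is relative convex if and only if it is strictly V-shaped.
   Context: For a real sequence $(x_i)$, $\Delta x_i=x_{i+1}-x_i$. ''Increasing'' means strictly increasing. A real sequence $a=(a_i)$ is relative convex if there exists an increasing real sequence $t=(t_i)$ with the same index set such that $(\Delta a_i/\Delta t_i)$ is non-decreasing. A sequence is strictly V-shaped if it falls into one of the following cases: (1) strictly monotonic; (2) strictly decreasing and then constant; (3) constant and then strictly increasing; (4) strictly decreasing and then strictly increasing; (5) strictly decreasing, then constant, then strictly increasing. Equivalently, there are indices $m\le M$ (allowed to be $+\infty$ for infinite sequences) such that $a_1>a_2>\dots>a_m=a_{m+1}=\dots=a_M<a_{M+1}<\cdots$. *)

From Stdlib Require Import Reals.
Open Scope R_scope.

(* Index sets of real sequences (0-based):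
   [Some n] is the finite index set {0, ..., n-1};
   [None]   is the infinite index set {0, 1, 2, ...}. *)
Definition inI (N : option nat) (i : nat) : Prop :=
  match N with None => True | Some n => (i < n)%nat end.

(* Extended natural numbers nat ∪ {+oo}, encoded as option nat (None = +oo). *)
Definition le_ext (k : nat) (m : option nat) : Prop :=
  match m with None => True | Some m => (k <= m)%nat end.

Definition le_ext2 (m M : option nat) : Prop :=
  match m, M with
  | _, None => True
  | None, Some _ => False
  | Some m, Some M => (m <= M)%nat
  end.

Definition Delta (x : nat -> R) (i : nat) : R := x (S i) - x i.

Definition increasing_on (N : option nat) (t : nat -> R) : Prop :=
  forall i j, inI N i -> inI N j -> (i < j)%nat -> t i < t j.

Definition relative_convex (N : option nat) (a : nat -> R) : Prop :=
  exists t : nat -> R, increasing_on N t /\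
    forall i, inI N (S (S i)) ->
      Delta a i / Delta t i <= Delta a (S i) / Delta t (S i).

(* Strictly V-shaped (0-based version of the characterization
   a_1 > ... > a_m = ... = a_M < a_{M+1} < ..., with m <= M in nat ∪ {+oo}):
   for consecutive indices i, i+1:
     i+1 <= m        -> a_i > a_{i+1},
     m <= i, i+1 <= M -> a_i = a_{i+1},
     M <= i          -> a_i < a_{i+1}. *)
Definition strictly_V_shaped (N : option nat) (a : nat -> R) : Prop :=
  exists m M : option nat, le_ext2 m M /\
    forall i, inI N (S i) ->
      (le_ext (S i) m -> a i > a (S i)) /\
      ((~ le_ext (S i) m) -> le_ext (S i) M -> a i = a (S i)) /\
      ((~ le_ext (S i) M) -> a i < a (S i)).

From Pilot Require Import Defs.
From Stdlib Require Import Reals.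
Open Scope R_scope.
From Stdlib Require Import Lra Lia Classical Wf_nat.

(* Stdlib's Reals also exports a constant named [Delta]. *)
Local Notation Delta := Defs.Delta.

(* Both properties are equivalent to the intermediate notion of a
   sign-monotone sequence of increments: whenever Delta a_i >= 0 (resp. > 0)
   and i+1 is still a difference index, also Delta a_(i+1) >= 0 (resp. > 0).
   - Relative convex => sign-monotone: Delta t_i > 0, so Delta a_i has the sign
     of the slope Delta a_i / Delta t_i, and the slopes are non-decreasing.
   - Sign-monotone => strictly V-shaped: the predicates "Delta a_i >= 0" and
     "Delta a_i > 0" are upward closed, so each holds exactly from a threshold
     on (m resp. M, possibly +oo), and m <= M because the second implies the
     first.  These thresholds are the m and M of the V-shape.
   - Strictly V-shaped => sign-monotone: read off from the three phases.
   - Sign-monotone => relative convex: let Delta t_i be |Delta a_i| (or 1 when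
     Delta a_i = 0); then the slopes are the signs -1, 0, 1 of Delta a_i, which
     are non-decreasing. *)

Definition sign_monotone (N : option nat) (d : nat -> R) : Prop :=
  forall i, inI N (S (S i)) ->
    (0 <= d i -> 0 <= d (S i)) /\ (0 < d i -> 0 < d (S i)).

Lemma inI_le (N : option nat) (i j : nat) : (i <= j)%nat -> inI N j -> inI N i.
Proof. destruct N; simpl; auto; lia. Qed.

Lemma upward_closed_le (N : option nat) (P : nat -> Prop) :
  (forall i, inI N (S (S i)) -> P i -> P (S i)) ->
  forall i j, (i <= j)%nat -> inI N (S j) -> P i -> P j.
Proof.
  intros Hstep i j Hij. induction Hij as [|j Hij IH]; intros Hj Hi; auto.
  apply Hstep; auto. apply IH; auto. apply (inI_le N _ (S (S j))); auto; lia.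
Qed.

Lemma threshold_exists (N : option nat) (P : nat -> Prop) :
  (forall i, inI N (S (S i)) -> P i -> P (S i)) ->
  exists m : option nat,
    (forall i, inI N (S i) -> (P i <-> ~ le_ext (S i) m)) /\
    (forall k, m = Some k -> inI N (S k) /\ P k).
Proof.
  intros Hstep.
  destruct (classic (exists i, inI N (S i) /\ P i)) as [Hex | Hnone].
  - destruct (dec_inh_nat_subset_has_unique_least_element
                (fun i => inI N (S i) /\ P i) (fun n => classic _) Hex)
      as [m [[[Hm Pm] Hleast] _]].
    exists (Some m). split.
    + intros i Hi; simpl. split.
      * intros Pi. assert (m <= i)%nat by (apply Hleast; auto). lia.
      * intros Hmi. apply (upward_closed_le N P Hstep m i); auto. lia.
    + intros k Hk. injection Hk as <-. auto.
  - exists None. split.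
    + intros i Hi; simpl. split; [intros Pi; exfalso; eauto | tauto].
    + discriminate.
Qed.

Lemma threshold_le (N : option nat) (P Q : nat -> Prop) (m M : option nat) :
  (forall i, inI N (S i) -> Q i -> P i) ->
  (forall i, inI N (S i) -> (P i <-> ~ le_ext (S i) m)) ->
  (forall k, M = Some k -> inI N (S k) /\ Q k) ->
  le_ext2 m M.
Proof.
  intros HQP HP HM. destruct M as [K|]; [|destruct m; exact I].
  destruct (HM K eq_refl) as [HK QK].
  apply (HP K HK) in HQP; auto. destruct m as [m|]; simpl in *; [lia|tauto].
Qed.

Lemma sign_monotone_V_shaped (N : option nat) (a : nat -> R) :
  sign_monotone N (Delta a) -> strictly_V_shaped N a.
Proof.
  intros Hsm.
  destruct (threshold_exists N (fun i => 0 <= Delta a i))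
    as [m [Hm _]]; [intros i Hi; apply (Hsm i Hi)|].
  destruct (threshold_exists N (fun i => 0 < Delta a i))
    as [M [HM AM]]; [intros i Hi; apply (Hsm i Hi)|].
  exists m, M. split; [apply (threshold_le N (fun i => 0 <= Delta a i) (fun i => 0 < Delta a i));
            auto; intros; lra|].
  intros i Hi. specialize (Hm i Hi). specialize (HM i Hi). unfold Delta in *.
  split; [|split].
  - intros Hle. assert (~ 0 <= a (S i) - a i) by tauto. lra.
  - intros Hnle Hle. assert (0 <= a (S i) - a i) by tauto.
    assert (~ 0 < a (S i) - a i) by tauto. lra.
  - intros Hnle. assert (0 < a (S i) - a i) by tauto. lra.
Qed.

Lemma not_le_ext_S (k : nat) (m : option nat) :
  ~ le_ext k m -> ~ le_ext (S k) m.
Proof. destruct m; simpl; auto; lia. Qed.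

Lemma V_shaped_sign_monotone (N : option nat) (a : nat -> R) :
  strictly_V_shaped N a -> sign_monotone N (Delta a).
Proof.
  intros [m [M [_ HV]]] i Hi.
  destruct (HV i (inI_le N (S i) (S (S i)) ltac:(lia) Hi)) as [Dec_i [Const_i Inc_i]].
  destruct (HV (S i) Hi) as [_ [Const_Si Inc_Si]].
  unfold Delta. split; intros Hpos.
  - assert (Hm : ~ le_ext (S i) m) by (intros Hle; specialize (Dec_i Hle); lra).
    apply not_le_ext_S in Hm.
    destruct (classic (le_ext (S (S i)) M)) as [HM | HM].
    + specialize (Const_Si Hm HM); lra.
    + specialize (Inc_Si HM); lra.
  - assert (Hm : ~ le_ext (S i) m) by (intros Hle; specialize (Dec_i Hle); lra).
    assert (HM : ~ le_ext (S i) M) by (intros Hle; specialize (Const_i Hm Hle); lra).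
    apply not_le_ext_S in HM. specialize (Inc_Si HM); lra.
Qed.

Lemma signs_of_ordered_quotients (x y p q : R) :
  0 < p -> 0 < q -> x / p <= y / q -> (0 <= x -> 0 <= y) /\ (0 < x -> 0 < y).
Proof.
  intros Hp Hq Hle.
  assert (Ex : x = x / p * p) by (field; lra).
  assert (Ey : y = y / q * q) by (field; lra).
  split; intros Hx.
  - assert (0 <= x / p) by (apply Rmult_le_pos; [lra | left; apply Rinv_0_lt_compat; lra]).
    rewrite Ey. apply Rmult_le_pos; lra.
  - assert (0 < x / p) by (apply Rmult_lt_0_compat; [lra | apply Rinv_0_lt_compat; lra]).
    rewrite Ey. apply Rmult_lt_0_compat; lra.
Qed.

Lemma relative_convex_sign_monotone (N : option nat) (a : nat -> R) :
  relative_convex N a -> sign_monotone N (Delta a).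
Proof.
  intros [t [Ht Hslopes]] i Hi.
  assert (Hdt : forall j, inI N (S j) -> 0 < Delta t j).
  { intros j Hj. unfold Delta.
    assert (t j < t (S j)) by (apply Ht; auto; apply (inI_le N _ (S j)); auto).
    lra. }
  apply (signs_of_ordered_quotients _ _ (Delta t i) (Delta t (S i))); auto.
  apply Hdt, (inI_le N _ (S (S i))); auto.
Qed.

(* The time scale used for the converse: |x|, or 1 when x = 0, so that
   x / scale x is the sign of x. *)
Definition scale (x : R) : R := if Req_EM_T x 0 then 1 else Rabs x.

Lemma scale_pos (x : R) : 0 < scale x.
Proof. unfold scale. destruct Req_EM_T; [lra | apply Rabs_pos_lt; auto]. Qed.

Lemma sign_by_scale (x : R) :
  (x = 0 /\ x / scale x = 0) \/ (0 < x /\ x / scale x = 1) \/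
  (x < 0 /\ x / scale x = -1).
Proof.
  unfold scale. destruct Req_EM_T as [E | E].
  - left. subst x. split; [reflexivity | field].
  - destruct (Rlt_or_le 0 x) as [Hx | Hx].
    + right; left. rewrite Rabs_right by lra. split; [lra | field; auto].
    + right; right. rewrite Rabs_left by lra. split; [lra | field; auto].
Qed.

Lemma sign_by_scale_le (x y : R) :
  (0 <= x -> 0 <= y) -> (0 < x -> 0 < y) -> x / scale x <= y / scale y.
Proof.
  intros H0 H1.
  destruct (sign_by_scale x) as [[Hx Ex] | [[Hx Ex] | [Hx Ex]]];
  destruct (sign_by_scale y) as [[Hy Ey] | [[Hy Ey] | [Hy Ey]]];
  rewrite Ex, Ey; lra.
Qed.

Fixpoint sign_time (a : nat -> R) (i : nat) : R :=
  match i with O => 0 | S k => sign_time a k + scale (Delta a k) end.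

Lemma increasing_of_steps (N : option nat) (t : nat -> R) :
  (forall i, t i < t (S i)) -> increasing_on N t.
Proof.
  intros Hstep i j _ _ Hij. induction Hij as [|j Hij IH].
  - apply Hstep.
  - specialize (Hstep j). lra.
Qed.

Lemma sign_monotone_relative_convex (N : option nat) (a : nat -> R) :
  sign_monotone N (Delta a) -> relative_convex N a.
Proof.
  intros Hsm. exists (sign_time a). split.
  - apply increasing_of_steps. intros i; simpl.
    pose proof (scale_pos (Delta a i)); lra.
  - intros i Hi.
    assert (Hdt : forall k, Delta (sign_time a) k = scale (Delta a k))
      by (intros k; unfold Delta at 1; simpl; ring).
    rewrite !Hdt. apply sign_by_scale_le; apply (Hsm i Hi).
Qed.

Theorem theorem2p2 (N : option nat) (a : nat -> R) :
  relative_convex N a <-> strictly_V_shaped N a.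
Proof.
  split; intros H.
  - apply sign_monotone_V_shaped, relative_convex_sign_monotone, H.
  - apply sign_monotone_relative_convex, V_shaped_sign_monotone, H.
Qed.
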